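(* Fix parameters $\mathfrak h=(h,\varepsilon,\theta)$. Let $w_h,v_h\in\mathbb V_h$ satisfy $$-\Delta^\diamond_{\infty,\mathfrak h}w_h(z)\le-\Delta^\diamond_{\infty,\mathfrak h}v_h(z)\qquad\forall z\in\mathcal N_h^I,\qquad(\ast)$$ and suppose that one of the following holds: (1) for every $z\in\mathcal N_h^I$, $(\ast)$ holds with strict inequality at $z$ or $-\Delta^\diamond_{\infty,\mathfrak h}w_h(z)<0$; (2) for every $z\in\mathcal N_h^I$, $(\ast)$ holds with strict inequality at $z$ or $-\Delta^\diamond_{\infty,\mathfrak h}v_h(z)>0$. Then $$\max_{z\in\mathcal N_h}\big[w_h(z)-v_h(z)\big]=\max_{z\in\mathcal N_h^b}\big[w_h(z)-v_h(z)\big].$$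
   Context: Setting: $\Omega\subset\mathbb R^d$ ($d\ge1$) is a bounded domain with continuous boundary. For $r>0$, $\Omega^{(r)}=\{x\in\Omega:\operatorname{dist}(x,\partial\Omega)>r\}$. $\mathcal T_h$ is a mesh of closed simplices, $h=\max_T\operatorname{diam}T$, $\Omega_h$ the interior of the union of the simplices, with $\Omega^{(h)}\subset\Omega_h\subset\Omega$; $\mathcal N_h$ is the set of vertices. $\mathbb V_h$ is the space of continuous piecewise linear functions on $\mathcal T_h$ and $\mathcal I_h$ is the Lagrange interpolant. Parameters $\mathfrak h=(h,\varepsilon,\theta)$ with $\varepsilon\in[h,\operatorname{diam}\Omega]$, $0<\theta\le1$. Interior nodes $\mathcal N_h^I=\mathcal N_h\cap\Omega^{(2\varepsilon)}$; boundary nodes $\mathcal N_h^b=\mathcal N_h\setminus\mathcal N_h^I$. $\mathbb S_\theta$ is a finite symmetric subset of the unit sphere $\mathbb S$ such that each $v\in\mathbb S$ has $v_\theta\in\mathbb S_\theta$ with $|v-v_\theta|\le\theta$. For $z\in\mathcal N_h^I$, $\mathcal N_{\mathfrak h}(z)=\{z\}\cup\{z+\varepsilon v_\theta:v_\theta\in\mathbb S_\theta\}$, $S^+_{\mathfrak h}w(z)=\varepsilon^{-1}(\max_{x\in\mathcal N_{\mathfrak h}(z)}w(x)-w(z))$, $S^-_{\mathfrak h}w(z)=\varepsilon^{-1}(w(z)-\min_{x\in\mathcal N_{\mathfrak h}(z)}w(x))$, and $-\Delta^\diamond_{\infty,\mathfrak h}w(z)=-\varepsilon^{-1}(S^+_{\mathfrak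 h}\mathcal I_hw(z)-S^-_{\mathfrak h}\mathcal I_hw(z))$ for $w\in C(\overline\Omega)$. *)

From HB Require Import structures.
From mathcomp Require Import all_boot all_order all_algebra.
From mathcomp Require Import all_classical all_reals all_analysis.
From Stdlib Require Import ClassicalEpsilon.
Set Implicit Arguments. Unset Strict Implicit. Unset Printing Implicit Defensive.
Import Order.TTheory GRing.Theory Num.Theory.
Import numFieldNormedType.Exports.
Local Open Scope classical_set_scope.
Local Open Scope ring_scope.

Section Defs.
Variables (R : realType) (d : nat).
Local Notation pt := 'rV[R]_d.

Definition enorm (x : pt) : R := Num.sqrt (\sum_(i < d) x ord0 i ^+ 2).
Definition eball (x : pt) (r : R) : set pt := [set y | enorm (y - x) < r].

Definition bdry (O : set pt) : set pt := closure O `\` interior O.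
Definition dist_bd (O : set pt) (x : pt) : R :=
  inf [set enorm (x - y) | y in bdry O].
Definition inner (O : set pt) (r : R) : set pt :=
  [set x | O x /\ r < dist_bd O x].
Definition diamset (A : set pt) : R := sup [set enorm (x - y) | x in A & y in A].

Definition is_domain (O : set pt) : Prop := open O /\ connected O /\ O !=set0.
Definition ebounded (O : set pt) : Prop := exists M : R, forall x, O x -> enorm x <= M.

(* continuous boundary: locally, after an orthogonal change of coordinates,
   O lies strictly below the graph of a continuous function of the other
   coordinates *)
Definition orthogonal_mx (Q : 'M[R]_d) : Prop := Q *m Q^T = 1%:M.
Definition continuous_boundary (O : set pt) : Prop :=
  forall x0, bdry O x0 ->
  exists r : R, 0 < r /\
  exists Q : 'M[R]_d, orthogonal_mx Q /\
  exists k : 'I_d, exists g : pt -> R,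
    continuous g /\
    (forall y y' : pt, (forall i, i != k -> y ord0 i = y' ord0 i) -> g y = g y') /\
    (forall x, eball x0 r x ->
       (O x <-> ((x - x0) *m Q) ord0 k < g ((x - x0) *m Q))).

Definition simplex := {ffun 'I_d.+1 -> pt}.
Definition verts (T : simplex) : seq pt := [seq T i | i <- enum 'I_d.+1].
Definition hull_seq (s : seq pt) : set pt :=
  [set x | exists lam : 'I_(size s) -> R,
     (forall i, 0 <= lam i) /\ \sum_i lam i = 1 /\
     x = \sum_i lam i *: nth 0 s i].
Definition shull (T : simplex) : set pt := hull_seq (verts T).
Definition nondeg (T : simplex) : Prop :=
  \det (\matrix_(i < d, j < d) (T (lift ord0 i) - T ord0) ord0 j) != 0.
Definition common_verts (T T' : simplex) : seq pt :=
  [seq x <- verts T | x \in verts T'].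
(* conforming: two simplices meet in a common face (possibly empty) *)
Definition conforming (M : seq simplex) : Prop :=
  forall T T', T \in M -> T' \in M ->
    shull T `&` shull T' = hull_seq (common_verts T T').
Definition is_mesh (M : seq simplex) : Prop :=
  (forall T, T \in M -> nondeg T) /\ conforming M.

Definition meshsize (M : seq simplex) : R :=
  \big[Num.max/0]_(T <- M) diamset (shull T).
Definition union_mesh (M : seq simplex) : set pt :=
  [set x | exists2 T, T \in M & shull T x].
Definition Omega_h (M : seq simplex) : set pt := interior (union_mesh M).
Definition nodes (M : seq simplex) : seq pt := flatten [seq verts T | T <- M].

Definition affine_on (A : set pt) (u : pt -> R) : Prop :=
  exists (a : pt) (b : R), forall x, A x -> u x = \sum_(i < d) a ord0 i * x ord0 i + b.
Definition Vh (M : seq simplex) (u : pt -> R) : Prop :=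
  {within union_mesh M, continuous u} /\ (forall T, T \in M -> affine_on (shull T) u).

Definition Ih (M : seq simplex) (w : pt -> R) : pt -> R :=
  epsilon (inhabits (fun _ : pt => 0))
    (fun u => Vh M u /\ forall z, z \in nodes M -> u z = w z).

Definition theta_net (S : seq pt) (theta : R) : Prop :=
  (forall v, v \in S -> enorm v = 1) /\
  (forall v, v \in S -> - v \in S) /\
  (forall v, enorm v = 1 -> exists2 vt, vt \in S & enorm (v - vt) <= theta).

Definition nbhd (eps : R) (S : seq pt) (z : pt) : seq pt :=
  z :: [seq z + eps *: v | v <- S].
Definition Splus (M : seq simplex) (eps : R) (S : seq pt) (w : pt -> R) (z : pt) : R :=
  eps^-1 * (\big[Num.max/Ih M w z]_(x <- nbhd eps S z) Ih M w x - Ih M w z).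
Definition Sminus (M : seq simplex) (eps : R) (S : seq pt) (w : pt -> R) (z : pt) : R :=
  eps^-1 * (Ih M w z - \big[Num.min/Ih M w z]_(x <- nbhd eps S z) Ih M w x).
Definition mlap (M : seq simplex) (eps : R) (S : seq pt) (w : pt -> R) (z : pt) : R :=
  - (eps^-1 * (Splus M eps S w z - Sminus M eps S w z)).

Definition interior_node (O : set pt) (M : seq simplex) (eps : R) (z : pt) : Prop :=
  z \in nodes M /\ inner O (2 * eps) z.
Definition bnodes (O : set pt) (M : seq simplex) (eps : R) : seq pt :=
  [seq z <- nodes M | ~~ `[< inner O (2 * eps) z >]].

End Defs.

From HB Require Import structures.
From mathcomp Require Import all_boot all_order all_algebra.
From mathcomp Require Import all_classical all_reals all_analysis.
From mathcomp Require Import lra ring.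
From Stdlib Require Import ClassicalEpsilon.
Import Order.TTheory GRing.Theory Num.Theory.
Import numFieldNormedType.Exports.
Local Open Scope classical_set_scope.
Local Open Scope ring_scope.

(* Write F = w - v on the nodes and, among the nodes maximizing F, pick one,
   z, maximizing w (first alternative) or minimizing v (second alternative).
   Points of the stencil of an interior node lie in the mesh, because their
   distance to the boundary exceeds 2 eps - eps >= h.  There the interpolant
   of w - v is a convex combination of nodal values of F, hence at most F z,
   so the operator of w at z is no smaller than that of v and the comparison
   at z is an equality.  In the first alternative the operator of w at z is
   then negative: some stencil point x has Ih w x > w z and
   Ih w x - Ih v x = F z, so the convex combination at x charges a node y with
   F y = F z and w y > w z, contradicting the choice of z.  The second
   alternative is the same argument for (-v, -w).  Hence z is a boundary node.
*)

Section EuclideanNorm.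
Context {R : realType} {d : nat}.
Local Notation pt := 'rV[R]_d.
Implicit Types x y : pt.

Lemma enorm_ge0 x : 0 <= enorm x.
Proof. exact: sqrtr_ge0. Qed.

Lemma enorm0 : enorm (0 : pt) = 0.
Proof. by rewrite /enorm big1 ?sqrtr0 // => i _; rewrite mxE expr0n. Qed.

Lemma enorm_sqr x : enorm x ^+ 2 = \sum_(i < d) x ord0 i ^+ 2.
Proof. by rewrite sqr_sqrtr // sumr_ge0 // => i _; rewrite sqr_ge0. Qed.

Lemma enormZ (c : R) x : enorm (c *: x) = `|c| * enorm x.
Proof.
rewrite /enorm -sqrtr_sqr -sqrtrM ?sqr_ge0 // mulr_sumr.
by congr Num.sqrt; apply: eq_bigr => i _; rewrite mxE exprMn.
Qed.

Lemma enormN x : enorm (- x) = enorm x.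
Proof. by rewrite -scaleN1r enormZ normrN normr1 mul1r. Qed.

Lemma enormB x y : enorm (x - y) = enorm (y - x).
Proof. by rewrite -enormN opprB. Qed.

(* Lagrange's identity: the defect in Cauchy-Schwarz is a sum of squares. *)
Lemma sqr_sum_mul_le x y :
  (\sum_(i < d) x ord0 i * y ord0 i) ^+ 2 <=
  (\sum_(i < d) x ord0 i ^+ 2) * (\sum_(j < d) y ord0 j ^+ 2).
Proof.
pose G (i j : 'I_d) := x ord0 i ^+ 2 * y ord0 j ^+ 2 -
                       x ord0 i * y ord0 i * (x ord0 j * y ord0 j).
have G_sum : \sum_i \sum_j G i j =
    (\sum_(i < d) x ord0 i ^+ 2) * (\sum_(j < d) y ord0 j ^+ 2) -
    (\sum_(i < d) x ord0 i * y ord0 i) ^+ 2.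
  by rewrite expr2 !big_distrlr -sumrB; apply: eq_bigr => i _; rewrite -sumrB.
have : 0 <= \sum_i \sum_j (x ord0 i * y ord0 j - x ord0 j * y ord0 i) ^+ 2.
  by do 2!(apply: sumr_ge0 => ? _); rewrite sqr_ge0.
have -> : \sum_i \sum_j (x ord0 i * y ord0 j - x ord0 j * y ord0 i) ^+ 2 =
          \sum_i \sum_j G i j + \sum_j \sum_i G i j.
  rewrite exchange_big -big_split; apply: eq_bigr => i _ /=.
  by rewrite -big_split; apply: eq_bigr => j _ /=; rewrite /G; ring.
by rewrite [X in _ + X]exchange_big /= G_sum -mulr2n pmulrn_lge0 // subr_ge0.
Qed.

Lemma sum_mul_le_enorm x y :
  \sum_(i < d) x ord0 i * y ord0 i <= enorm x * enorm y.
Proof.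
apply: le_trans (ler_norm _) _.
rewrite -sqrtr_sqr /enorm -sqrtrM ?sumr_ge0 // => [|i _]; last exact: sqr_ge0.
by rewrite ler_sqrt ?sqr_sum_mul_le // mulr_ge0 // sumr_ge0 // => i _; rewrite sqr_ge0.
Qed.

Lemma enormD x y : enorm (x + y) <= enorm x + enorm y.
Proof.
rewrite -ler_sqr ?nnegrE ?addr_ge0 ?enorm_ge0 // sqrrD !enorm_sqr.
have -> : \sum_(i < d) (x + y) ord0 i ^+ 2 = \sum_(i < d) x ord0 i ^+ 2 +
    (\sum_(i < d) x ord0 i * y ord0 i) *+ 2 + \sum_(i < d) y ord0 i ^+ 2.
  rewrite -sumrMnl -!big_split; apply: eq_bigr => i _ /=; rewrite mxE; ring.
by rewrite lerD2r lerD2l lerMn2r /= sum_mul_le_enorm.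
Qed.

End EuclideanNorm.

Lemma connected_subset_open {T : topologicalType} (O C : set T) :
  open O -> connected C -> C `&` O !=set0 ->
  (forall x, C x -> closure O x -> O x) -> C `<=` O.
Proof.
move=> oO cC [x0 [Cx0 Ox0]] CclO.
have sepO : separated O (~` closure O).
  split; first by apply/seteqP; split => // x [clOx].
  apply/seteqP; split => // x [Ox clCx].
  have /clCx [y [nclOy Oy]] : nbhs x O by rewrite -(interior_id O).1 in Ox.
  exact/nclOy/subset_closure.
have CO : C `<=` O `|` ~` closure O.
  by move=> x Cx; have [/(CclO x Cx)|] := pselect (closure O x); [left|right].
case: (connected_subset sepO CO cC) => // /(_ x0 Cx0).
by move/(_ (subset_closure Ox0)).
Qed.

Section Distance.
Context {R : realType} {d : nat}.
Local Notation pt := 'rV[R]_d.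
Implicit Types (O : set pt) (x y : pt).

Lemma dist_bd_bdry O x : bdry O x -> dist_bd O x <= 0.
Proof.
move=> bx; apply: (@le_trans _ _ (enorm (x - x))); last by rewrite subrr enorm0.
apply: ge_inf; last by exists x.
by exists 0 => _ [y _ <-]; exact: enorm_ge0.
Qed.

Lemma dist_bd_lipschitz O x y : dist_bd O x - enorm (y - x) <= dist_bd O y.
Proof.
have [[b0 bb0]|nobdry] := pselect (bdry O !=set0); last first.
  have bO0 : bdry O = set0 by apply/seteqP; split => // b bb; apply: nobdry; exists b.
  by rewrite /dist_bd bO0 !image_set0 inf0 sub0r oppr_le0 enorm_ge0.
apply: lb_le_inf; first by exists (enorm (y - b0)), b0.
move=> _ [b bb <-]; rewrite lerBlDl.
have := enormD (x - y) (y - b); rewrite addrA subrK enormB => /(le_trans _); apply.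
by apply: ge_inf; [exists 0 => _ [? _ <-]; exact: enorm_ge0 | exists b].
Qed.

Lemma inner_shift O r x y : open O -> 0 <= r ->
  inner O (r + enorm y) x -> inner O r (x + y).
Proof.
move=> oO r0 [Ox dx].
have far t : 0 <= t <= 1 -> r < dist_bd O (x + t *: y).
  move=> /andP[t0 t1]; apply: lt_le_trans (dist_bd_lipschitz O x _).
  rewrite (addrC x) addrK enormZ ger0_norm //.
  have : t * enorm y <= enorm y by rewrite ler_piMl ?enorm_ge0.
  lra.
split; last by have := far 1; rewrite scale1r ler01 lexx; apply.
pose seg := (fun t : R => x + t *: y) @` `[0, 1].
have seg_conn : connected seg.
  apply: connected_continuous_connected; first exact: segment_connected.
  apply: continuous_subspaceT => t; apply: cvgD; first exact: cvg_cst.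
  by apply: cvgZl; exact: cvg_id.
have segO : seg `<=` O.
  apply: connected_subset_open => //.
    by exists x; split => //; exists 0; rewrite /= ?scale0r ?addr0 // in_itv /= lexx ler01.
  move=> _ [t + <-] clO; rewrite /= in_itv /= => /far tfar.
  apply: contrapT => nO.
  have : dist_bd O (x + t *: y) <= 0.
    by apply: dist_bd_bdry; split; rewrite // (interior_id O).1.
  lra.
by apply: segO; exists 1; rewrite /= ?scale1r // in_itv /= lexx ler01.
Qed.

Lemma le_inner O r r' x : r <= r' -> inner O r' x -> inner O r x.
Proof. by move=> rr' [Ox dx]; split; last exact: le_lt_trans dx. Qed.

End Distance.

Section SeqExtrema.
Context {disp : Order.disp_t} {T : orderType disp} {I : eqType}.
Implicit Types (r : seq I) (F G : I -> T).
Local Open Scope order_scope.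

Lemma bigmax_seq_attained r F x0 :
  \big[Order.max/x0]_(i <- r) F i = x0 \/
  exists2 i, i \in r & \big[Order.max/x0]_(i <- r) F i = F i.
Proof.
rewrite big_seq; elim/big_rec: _ => [|i m ir [->|[j jr ->]]]; first by left.
  by rewrite maxEle; case: ifP => _; [left | right; exists i].
by rewrite maxEle; case: ifP => _; right; [exists j | exists i].
Qed.

Lemma seq_argmax F {r} : r != [::] ->
  exists2 i, i \in r & forall j, j \in r -> F j <= F i.
Proof.
case: r => // a r _.
have [E|[i ir E]] := bigmax_seq_attained (a :: r) F (F a);
  [exists a; rewrite ?mem_head | exists i] => // j jr; rewrite -E; exact: le_bigmax_seq.
Qed.

Lemma lexi_argmax F G {r} : r != [::] ->
  exists2 i, i \in r & (forall j, j \in r -> F j <= F i) /\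
                       (forall j, j \in r -> F j = F i -> G j <= G i).
Proof.
move=> r0; have [i0 i0r F_i0] := seq_argmax F r0.
have /(seq_argmax G) [i] : [seq j <- r | F j == F i0] != [::].
  by apply/eqP => /(congr1 (fun t => i0 \in t)); rewrite mem_filter eqxx i0r.
rewrite mem_filter => /andP[/eqP Fi ir] G_i; exists i; rewrite // Fi; split => // j jr Fj.
by apply: G_i; rewrite mem_filter Fj eqxx.
Qed.

End SeqExtrema.

Lemma bigmaxe_filter_of_ascent {R : realType} {T : eqType} (phi : T -> R)
    (s : seq T) (P : T -> Prop) (F : T -> R) :
  (forall z, z \in s -> P z -> (forall y, y \in s -> F y <= F z) ->
     exists2 y, y \in s & F y = F z /\ phi z < phi y) ->
  (\big[maxe/-oo]_(z <- s) (F z)%:E =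
   \big[maxe/-oo]_(z <- [seq z <- s | ~~ `[< P z >]]) (F z)%:E)%E.
Proof.
move=> ascent; have [->|s0] := eqVneq s [::]; first by rewrite !big_nil.
have [b bs [F_b phi_b]] := lexi_argmax F phi s0.
have nPb : ~ P b.
  move=> Pb; have [y ys [Fy lt_phi]] := ascent b bs Pb F_b.
  by move: (phi_b y ys Fy); rewrite leNgt lt_phi.
apply/le_anti/andP; split; rewrite big_seq; apply: bigmax_le => [|y ys];
  rewrite ?leNye //.
  apply: (@le_trans _ _ (F b)%:E); first by rewrite lee_fin F_b.
  by apply: le_bigmax_seq; rewrite // mem_filter bs andbT; apply/asboolPn.
by move: ys; rewrite mem_filter => /andP[_ ys]; exact: le_bigmax_seq.
Qed.

Section ConvexCombination.
Context {R : realDomainType} {n : nat}.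
Context {lam : 'I_n -> R}.
Hypotheses (lam_ge0 : forall i, 0 <= lam i) (lam_sum1 : \sum_i lam i = 1).

Lemma convex_comb_le (f : 'I_n -> R) m :
  (forall i, f i <= m) -> \sum_i lam i * f i <= m.
Proof.
move=> f_le; rewrite -[m]mul1r -lam_sum1 mulr_suml.
by apply: ler_sum => i _; rewrite ler_wpM2l.
Qed.

Lemma convex_comb_max (f : 'I_n -> R) m :
  (forall i, f i <= m) -> m <= \sum_i lam i * f i ->
  forall i, 0 < lam i -> f i = m.
Proof.
move=> f_le m_le i lam_i.
have gap0 : \sum_j lam j * (m - f j) = 0.
  apply/le_anti/andP; split; last by rewrite sumr_ge0 // => j _; rewrite mulr_ge0 ?subr_ge0.
  have -> : \sum_j lam j * (m - f j) = m * \sum_j lam j - \sum_j lam j * f j.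
    by rewrite mulr_sumr -sumrB; apply: eq_bigr => j _; ring.
  by rewrite lam_sum1 mulr1 subr_le0.
move/eqP: gap0; rewrite psumr_eq0 => [/allP/(_ i (mem_index_enum i))|j _].
  by rewrite mulf_eq0 gt_eqF //= subr_eq0 => /eqP.
by rewrite mulr_ge0 ?subr_ge0.
Qed.

Lemma convex_comb_gt (g : 'I_n -> R) c :
  c < \sum_i lam i * g i -> exists i, 0 < lam i /\ c < g i.
Proof.
move=> c_lt; apply: contrapT => none; move: c_lt; apply/negP; rewrite -leNgt.
rewrite -[c]mul1r -lam_sum1 mulr_suml; apply: ler_sum => i _.
have [lam_i|lam_le0] := ltP 0 (lam i); last first.
  have -> : lam i = 0 by apply/le_anti; rewrite lam_le0 lam_ge0.
  by rewrite !mul0r.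
by rewrite ler_wpM2l ?lam_ge0 // leNgt; apply/negP => lt_g; apply: none; exists i.
Qed.

End ConvexCombination.

Section Interpolation.
Context {R : realType} {d : nat}.
Local Notation pt := 'rV[R]_d.
Context {M : seq (simplex R d)}.

Lemma affine_comb (a : pt) (b : R) n (lam : 'I_n -> R) (p : 'I_n -> pt) :
  \sum_i lam i = 1 ->
  \sum_(k < d) a ord0 k * (\sum_i lam i *: p i) ord0 k + b =
  \sum_i lam i * (\sum_(k < d) a ord0 k * p i ord0 k + b).
Proof.
move=> lam_sum1; under [RHS]eq_bigr do rewrite mulrDr.
rewrite big_split /= -mulr_suml lam_sum1 mul1r; congr (_ + _).
under eq_bigr do rewrite summxE mulr_sumr.
rewrite exchange_big /=; apply: eq_bigr => i _; rewrite mulr_sumr.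
by apply: eq_bigr => k _; rewrite mxE; ring.
Qed.

Lemma Ih_nodal {f} : Vh M f -> Vh M (Ih M f) /\ {in nodes M, Ih M f =1 f}.
Proof.
move=> Vf; apply: (epsilon_spec (inhabits (fun _ : pt => 0))
  (fun u => Vh M u /\ forall z, z \in nodes M -> u z = f z)).
by exists f.
Qed.

Lemma Ih_convex_comb x : union_mesh M x ->
  exists n (lam : 'I_n -> R) (p : 'I_n -> pt),
    [/\ forall i, 0 <= lam i, \sum_i lam i = 1, forall i, p i \in nodes M &
        forall f, Vh M f -> Ih M f x = \sum_i lam i * f (p i)].
Proof.
move=> [T TM [lam [lam_ge0 [lam_sum1 ->]]]].
pose p (i : 'I_(size (verts T))) := nth 0 (verts T) i.
have p_shull i : shull T (p i).
  exists (fun j => (j == i)%:R); split; first by move=> j; case: (j == i).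
  split; first by rewrite (bigD1 i) //= eqxx big1 ?addr0 // => j /negbTE ->.
  by rewrite (bigD1 i) //= eqxx scale1r big1 ?addr0 // => j /negbTE ->; rewrite scale0r.
have p_node i : p i \in nodes M.
  by apply/flattenP; exists (verts T); [exact: map_f | exact: mem_nth].
exists (size (verts T)), lam, p; split => // f Vf.
have [[_ Ih_aff] Ih_f] := Ih_nodal Vf.
have [a [b Ih_ab]] := Ih_aff T TM.
rewrite Ih_ab; last by exists lam.
rewrite affine_comb //; apply: eq_bigr => i _.
by rewrite -Ih_ab ?Ih_f ?p_node //; exact: p_shull.
Qed.

End Interpolation.

Section StencilOperator.
Context {R : realFieldType} {T : eqType}.
Implicit Types (e : R) (s : seq T) (u : T -> R) (z : T).

Definition up_var s u z := \big[Num.max/u z]_(x <- s) u x - u z.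
Definition down_var s u z := u z - \big[Num.min/u z]_(x <- s) u x.

Definition stencil_lap e s u z : R :=
  - (e^-1 * (e^-1 * up_var s u z - e^-1 * down_var s u z)).

Lemma stencil_lapE e s u z :
  stencil_lap e s u z = - (e^-1 ^+ 2 * (up_var s u z - down_var s u z)).
Proof. by rewrite /stencil_lap; ring. Qed.

Lemma stencil_lapN e s u z :
  stencil_lap e s (fun x => - u x) z = - stencil_lap e s u z.
Proof.
rewrite /stencil_lap /up_var /down_var.
rewrite -(big_morph _ (@oppr_min R) (erefl (- u z))).
rewrite -(big_morph _ (@oppr_max R) (erefl (- u z))).
ring.
Qed.

Section AtMaximum.
Context {s : seq T} {u u' : T -> R} {z : T}.
Hypothesis max_at_z : forall x, x \in s -> u x - u' x <= u z - u' z.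

Lemma up_var_le : up_var s u z <= up_var s u' z.
Proof.
rewrite /up_var; set m' := \big[Num.max/u' z]_(x <- s) u' x.
suff : \big[Num.max/u z]_(x <- s) u x <= m' - u' z + u z by lra.
rewrite big_seq; apply: bigmax_le => [|x xs].
  have : u' z <= m' by exact: bigmax_ge_id.
  lra.
have : u' x <= m' by exact: le_bigmax_seq.
by have := max_at_z _ xs; lra.
Qed.

Lemma down_var_le : down_var s u' z <= down_var s u z.
Proof.
rewrite /down_var; set m := \big[Num.min/u z]_(x <- s) u x.
suff : m - u z + u' z <= \big[Num.min/u' z]_(x <- s) u' x by lra.
rewrite big_seq; apply: le_bigmin => [|x xs].
  have : m <= u z by exact: bigmin_le_id.
  lra.
have : m <= u x by exact: ge_bigmin_seq.
by have := max_at_z _ xs; lra.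
Qed.

Lemma stencil_lap_le_at_max e : stencil_lap e s u' z <= stencil_lap e s u z.
Proof.
rewrite !stencil_lapE lerN2 ler_wpM2l ?sqr_ge0 //.
by have := up_var_le; have := down_var_le; lra.
Qed.

(* At a maximum point of [u - u'] the comparison forces equal upward
   variations; the point realizing that of [u] is then again a maximum point. *)
Lemma stencil_lap_ascent {e} :
  stencil_lap e s u z <= stencil_lap e s u' z -> stencil_lap e s u z < 0 ->
  exists2 x, x \in s & u z < u x /\ u z - u' z <= u x - u' x.
Proof.
rewrite !stencil_lapE => le_lap lt_lap.
have e2_gt0 : 0 < e^-1 ^+ 2.
  rewrite lt0r sqr_ge0 andbT; apply: contraTneq lt_lap => ->.
  by rewrite mul0r oppr0 ltxx.
rewrite lerN2 ler_pM2l // in le_lap; rewrite oppr_lt0 pmulr_rgt0 // in lt_lap.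
have down_le := down_var_le.
have down_ge0 : 0 <= down_var s u z by rewrite subr_ge0 bigmin_le_id.
have [max_uz|[x xs max_ux]] := bigmax_seq_attained s u (u z).
  have : up_var s u z = 0 by rewrite /up_var max_uz subrr.
  lra.
have up_u : up_var s u z = u x - u z by rewrite /up_var max_ux.
have up_u' : u' x - u' z <= up_var s u' z.
  by rewrite /up_var lerD2r; exact: le_bigmax_seq.
by exists x => //; split; lra.
Qed.

End AtMaximum.

Lemma stencil_lap_descent {e s u u' z} :
  (forall x, x \in s -> u x - u' x <= u z - u' z) ->
  stencil_lap e s u z <= stencil_lap e s u' z -> 0 < stencil_lap e s u' z ->
  exists2 x, x \in s & u' x < u' z /\ u z - u' z <= u x - u' x.
Proof.
move=> max_at_z le_lap gt_lap.
have [|||x xs] := @stencil_lap_ascent s (fun x => - u' x) (fun x => - u x) z _ e.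
- by move=> x xs; rewrite opprK addrC -[X in _ <= X]addrC opprK; exact: max_at_z.
- by rewrite !stencil_lapN lerN2.
- by rewrite stencil_lapN oppr_lt0.
by rewrite ltrN2 !opprK addrC [X in _ <= X]addrC => ?; exists x.
Qed.

End StencilOperator.

Section MeshComparison.
Context {R : realType} {d : nat}.
Local Notation pt := 'rV[R]_d.
Context {O : set pt} {M : seq (simplex R d)} {h eps : R} {S : seq pt}.
Context {w v : pt -> R}.
Hypotheses (oO : open O) (h_ge0 : 0 <= h) (h_le_eps : h <= eps).
Hypothesis S_unit : forall s, s \in S -> enorm s = 1.
Hypothesis inner_sub : inner O h `<=` Omega_h M.
Hypotheses (Vw : Vh M w) (Vv : Vh M v).

Lemma mlapE u z : mlap M eps S u z = stencil_lap eps (nbhd eps S z) (Ih M u) z.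
Proof. by []. Qed.

Lemma nbhd_in_mesh {z x} : inner O (2 * eps) z -> x \in nbhd eps S z -> union_mesh M x.
Proof.
move=> z_in; rewrite inE => /predU1P[->|/mapP[s sS ->]];
  apply: interior_subset; apply: inner_sub.
  by move: z_in; apply: le_inner; move: h_le_eps h_ge0; lra.
apply: inner_shift => //; move: z_in; apply: le_inner.
by rewrite enormZ S_unit // mulr1 ger0_norm; move: h_le_eps h_ge0; lra.
Qed.

Lemma Ih_diff_le {x m} : union_mesh M x ->
  (forall y, y \in nodes M -> w y - v y <= m) -> Ih M w x - Ih M v x <= m.
Proof.
move=> /Ih_convex_comb [n [lam [p [lam_ge0 lam_sum1 p_node Ih_x]]]] wv_le.
rewrite !Ih_x // -sumrB; under eq_bigr do rewrite -mulrBr.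
by apply: convex_comb_le => // i; exact: wv_le.
Qed.

Lemma Ih_diff_max_support {x m} : union_mesh M x ->
  (forall y, y \in nodes M -> w y - v y <= m) -> m <= Ih M w x - Ih M v x ->
  exists n (lam : 'I_n -> R) (p : 'I_n -> pt),
    [/\ forall i, 0 <= lam i, \sum_i lam i = 1,
        forall i, 0 < lam i -> p i \in nodes M /\ w (p i) - v (p i) = m,
        Ih M w x = \sum_i lam i * w (p i) & Ih M v x = \sum_i lam i * v (p i)].
Proof.
move=> /Ih_convex_comb [n [lam [p [lam_ge0 lam_sum1 p_node Ih_x]]]] wv_le m_le.
exists n, lam, p; split; rewrite ?Ih_x // => i lam_i; split => //.
apply: (convex_comb_max lam_ge0 lam_sum1 (fun i => w (p i) - v (p i))) => //.
  by move=> j; exact: wv_le.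
by move: m_le; rewrite !Ih_x // -sumrB; under eq_bigr do rewrite -mulrBr.
Qed.

Lemma Ih_max_stencil {z} : z \in nodes M -> inner O (2 * eps) z ->
  (forall y, y \in nodes M -> w y - v y <= w z - v z) ->
  forall x, x \in nbhd eps S z ->
  Ih M w x - Ih M v x <= Ih M w z - Ih M v z.
Proof.
move=> zn z_in wv_max x xs.
rewrite [Ih M w z](Ih_nodal Vw).2 // [Ih M v z](Ih_nodal Vv).2 //.
exact: Ih_diff_le (nbhd_in_mesh z_in xs) wv_max.
Qed.

Section AtMaximalNode.
Context {z : pt}.
Hypotheses (zn : z \in nodes M) (z_in : inner O (2 * eps) z).
Hypothesis wv_max : forall y, y \in nodes M -> w y - v y <= w z - v z.
Hypothesis le_mlap : mlap M eps S w z <= mlap M eps S v z.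

Lemma ascent_node :
  mlap M eps S w z < mlap M eps S v z \/ mlap M eps S w z < 0 ->
  exists2 y, y \in nodes M & w y - v y = w z - v z /\ w z < w y.
Proof.
have Ih_max := Ih_max_stencil zn z_in wv_max.
have ge_mlap := stencil_lap_le_at_max Ih_max eps; rewrite -!mlapE in ge_mlap.
case=> [|lt_mlap]; first by rewrite ltNge ge_mlap.
have [x xs []] := stencil_lap_ascent Ih_max le_mlap lt_mlap.
rewrite [Ih M w z](Ih_nodal Vw).2 // [Ih M v z](Ih_nodal Vv).2 // => wz_lt wv_le.
have [n [lam [p [lam_ge0 lam_sum1 p_max Ih_w _]]]] :=
  Ih_diff_max_support (nbhd_in_mesh z_in xs) wv_max wv_le.
move: wz_lt; rewrite Ih_w => /(convex_comb_gt lam_ge0 lam_sum1) [i [lam_i wz_lt]].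
by have [pn wv_p] := p_max i lam_i; exists (p i).
Qed.

Lemma descent_node :
  mlap M eps S w z < mlap M eps S v z \/ 0 < mlap M eps S v z ->
  exists2 y, y \in nodes M & w y - v y = w z - v z /\ v y < v z.
Proof.
have Ih_max := Ih_max_stencil zn z_in wv_max.
have ge_mlap := stencil_lap_le_at_max Ih_max eps; rewrite -!mlapE in ge_mlap.
case=> [|gt_mlap]; first by rewrite ltNge ge_mlap.
have [x xs []] := stencil_lap_descent Ih_max le_mlap gt_mlap.
rewrite [Ih M w z](Ih_nodal Vw).2 // [Ih M v z](Ih_nodal Vv).2 // => vx_lt wv_le.
have [n [lam [p [lam_ge0 lam_sum1 p_max _ Ih_v]]]] :=
  Ih_diff_max_support (nbhd_in_mesh z_in xs) wv_max wv_le.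
have : - v z < \sum_i lam i * - v (p i).
  by rewrite ltrNl -sumrN; under eq_bigr do rewrite mulrN opprK; rewrite -Ih_v.
move=> /(convex_comb_gt lam_ge0 lam_sum1) [i [lam_i vz_lt]].
by have [pn wv_p] := p_max i lam_i; exists (p i); rewrite // -ltrN2.
Qed.

End AtMaximalNode.

End MeshComparison.

Theorem theorem3p2 (R : realType) (d : nat) (O : set 'rV[R]_d)
  (M : seq (simplex R d)) (h eps theta : R) (S : seq 'rV[R]_d)
  (w v : 'rV[R]_d -> R) :
  (0 < d)%N -> is_domain O -> ebounded O -> continuous_boundary O ->
  is_mesh M -> h = meshsize M ->
  inner O h `<=` Omega_h M -> Omega_h M `<=` O ->
  h <= eps -> eps <= diamset O -> 0 < theta -> theta <= 1 ->
  theta_net S theta ->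
  Vh M w -> Vh M v ->
  (forall z, interior_node O M eps z -> mlap M eps S w z <= mlap M eps S v z) ->
  ((forall z, interior_node O M eps z ->
      mlap M eps S w z < mlap M eps S v z \/ mlap M eps S w z < 0) \/
   (forall z, interior_node O M eps z ->
      mlap M eps S w z < mlap M eps S v z \/ 0 < mlap M eps S v z)) ->
  (\big[maxe/-oo%E]_(z <- nodes M) (w z - v z)%:E =
   \big[maxe/-oo%E]_(z <- bnodes O M eps) (w z - v z)%:E)%E.
Proof.
move=> _ [oO _] _ _ _ h_mesh inner_sub _ h_le_eps _ _ _ [S_unit _] Vw Vv le_mlap.
have h_ge0 : 0 <= h by rewrite h_mesh; exact: bigmax_ge_id.
case=> strict.
- apply: (bigmaxe_filter_of_ascent w) => z zn z_in wv_max.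
  exact: (ascent_node oO h_ge0 h_le_eps S_unit inner_sub Vw Vv zn z_in wv_max
            (le_mlap z (conj zn z_in)) (strict z (conj zn z_in))).
- apply: (bigmaxe_filter_of_ascent (fun y => - v y)) => z zn z_in wv_max.
  have [y yn [wv_y lt_v]] := descent_node oO h_ge0 h_le_eps S_unit inner_sub Vw Vv
    zn z_in wv_max (le_mlap z (conj zn z_in)) (strict z (conj zn z_in)).
  by exists y; rewrite // ltrN2.
Qed.
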